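(* Let $X_1,\dots,X_p$ be attributes with finite domains $D_i=\{x_i^1,\dots,x_i^{q_i}\}$, $C$ a candidate database, $\pi$ a target distribution, $k\in\{1,\dots,|C|\}$, and $A\subseteq C$ a committee with $|A|=k$. Form the binary instance: for each $i\le p$ and $j\le q_i$ a binary attribute $X_{i,j}$ with domain $\{0,1\}$; for each candidate $c\in C$ a new candidate $c'$ with $X_{i,j}(c')=1$ if $X_i(c)=x_i^j$ and $X_{i,j}(c')=0$ otherwise; target $\pi_{\mathrm{new}}$ given by $\pi_{i,j}^1=\pi_i^j$ and $\pi_{i,j}^0=1-\pi_i^j$; and $A_{\mathrm{new}}=\{c':c\in A\}$. Then (1) $\|\pi_{\mathrm{new}},r(A_{\mathrm{new}})\|_1=2\|\pi,r(A)\|_1$; (2) if $\|\pi,r(A)\|_{1,\max}\neq 0$, then $1\le \dfrac{\|\pi_{\mathrm{new}},r(A_{\mathrm{new}})\|_{1,\max}}{\|\pi,r(A)\|_{1,\max}}\le \max_i|D_i|$; (3) $\|\pi_{\mathrm{new}},r(A_{\mathrm{new}})\|_{\max}=\|\pi,r(A)\|_{\max}$.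
   Context: A candidate database is a finite set $C$ in which each candidate $c$ has a value vector $(X_1(c),\dots,X_p(c))\in D_1\times\dots\times D_p$ (different candidates may share a vector). A target distribution is $\pi=(\pi_1,\dots,\pi_p)$ with $\pi_i=(\pi_i^1,\dots,\pi_i^{q_i})$ nonnegative reals summing to $1$. For a committee $A$ of size $k$, $r_i^j(A)=|\{c\in A: X_i(c)=x_i^j\}|/k$ (and analogously for the binary instance, indexing values of $X_{i,j}$ by $0,1$). Loss functions: $\|\pi,r(A)\|_1=\sum_{i,j}|r_i^j(A)-\pi_i^j|$; $\|\pi,r(A)\|_{1,\max}=\sum_i\max_j|r_i^j(A)-\pi_i^j|$; $\|\pi,r(A)\|_{\max}=\max_{i,j}|r_i^j(A)-\pi_i^j|$. *)

From HB Require Import structures.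
From mathcomp Require Import all_boot all_order all_algebra.
Import Order.TTheory GRing.Theory Num.Theory.
Local Open Scope ring_scope.

Definition ratio (R : realFieldType) {C I : finType} {V : I -> finType}
  (X : C -> forall i, V i) (A : {set C}) (k : nat) {i : I} (v : V i) : R :=
  (#|[set c in A | X c i == v]|)%:R / k%:R.

Definition loss1 (R : realFieldType) {C I : finType} {V : I -> finType}
  (X : C -> forall i, V i) (pi : forall i, V i -> R) (A : {set C}) (k : nat) : R :=
  \sum_(i : I) \sum_(v : V i) `|ratio R X A k v - pi i v|.

(* || pi, r(A) ||_{1,max}  (maxima of nonnegative reals, 0 as neutral) *)
Definition loss1max (R : realFieldType) {C I : finType} {V : I -> finType}
  (X : C -> forall i, V i) (pi : forall i, V i -> R) (A : {set C}) (k : nat) : R :=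
  \sum_(i : I) \big[Num.max/0]_(v : V i) `|ratio R X A k v - pi i v|.

Definition lossmax (R : realFieldType) {C I : finType} {V : I -> finType}
  (X : C -> forall i, V i) (pi : forall i, V i -> R) (A : {set C}) (k : nat) : R :=
  \big[Num.max/0]_(i : I) \big[Num.max/0]_(v : V i) `|ratio R X A k v - pi i v|.

Definition bin_attr {p : nat} (q : 'I_p -> nat) : finType :=
  {i : 'I_p & 'I_(q i)}.

Definition bin_dom {p : nat} {q : 'I_p -> nat} : bin_attr q -> finType :=
  fun _ => bool.

Definition bin_X {C : finType} {p : nat} {q : 'I_p -> nat}
  (X : C -> forall i : 'I_p, 'I_(q i)) : C -> forall t : bin_attr q, bin_dom t :=
  fun c t => X c (tag t) == tagged t.

Definition bin_pi {R : realFieldType} {p : nat} {q : 'I_p -> nat}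
  (pi : forall i : 'I_p, 'I_(q i) -> R) : forall t : bin_attr q, bin_dom t -> R :=
  fun t b => if b then pi (tag t) (tagged t) else 1 - pi (tag t) (tagged t).

From Pilot Require Import Defs.
From HB Require Import structures.
From mathcomp Require Import all_boot all_order all_algebra.
From mathcomp Require Import ring.
Import Order.TTheory GRing.Theory Num.Theory.
Local Open Scope ring_scope.

(* For the binary attribute X_{i,j} both values deviate from the target by
   the same amount e_{ij} = |r_i^j(A) - pi_i^j|: the value 1 reproduces the
   old ratio and target, the value 0 their complements to 1.  Hence the new
   l_1 loss counts every e_{ij} twice and the new max loss is the old one.
   The new l_{1,max} loss sums the e_{ij} over all pairs, i.e. it is the old
   l_1 loss, and for each attribute the sum of its q_i deviations lies
   between their maximum and q_i times it.  The target need not be a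
   distribution for any of this. *)

Section BigmaxSum.
Context {R : realFieldType} {T : finType}.
Implicit Type F : T -> R.

Lemma bigmax_le_sum F :
  (forall x, 0 <= F x) -> \big[Num.max/0]_(x : T) F x <= \sum_(x : T) F x.
Proof.
move=> F_ge0; apply: bigmax_le => [|x _]; first exact: sumr_ge0.
by rewrite (bigD1 x) //= lerDl sumr_ge0.
Qed.

Lemma sum_le_card_bigmax F :
  \sum_(x : T) F x <= #|T|%:R * \big[Num.max/0]_(x : T) F x.
Proof.
rewrite -sum1_card natr_sum mulr_suml.
by apply: ler_sum => x _; rewrite mul1r le_bigmax.
Qed.

End BigmaxSum.

Section BinaryInstance.
Variables (R : realFieldType) (C : finType) (p : nat) (q : 'I_p -> nat).
Variables (X : C -> forall i : 'I_p, 'I_(q i)) (pi : forall i : 'I_p, 'I_(q i) -> R).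
Variable A : {set C}.
Hypothesis A_neq0 : (0 < #|A|)%N.

Lemma ratio_bin_true (t : bin_attr q) :
  Defs.ratio R (bin_X X) A #|A| (i := t) true = Defs.ratio R X A #|A| (tagged t).
Proof.
rewrite /Defs.ratio; congr (_%:R / _); apply: eq_card => c.
by rewrite !inE eqb_id.
Qed.

Lemma ratio_bin_false (t : bin_attr q) :
  Defs.ratio R (bin_X X) A #|A| (i := t) false = 1 - Defs.ratio R X A #|A| (tagged t).
Proof.
set S := [set c | X c (tag t) == tagged t].
have cardAS : #|[set c in A | X c (tag t) == tagged t]| = #|A :&: S|.
  by apply: eq_card => c; rewrite !inE.
have cardADS : #|[set c in A | bin_X X c t == false]| = #|A :\: S|.
  by apply: eq_card => c; rewrite !inE eqbF_neg andbC.
have cardADS_R : #|A :\: S|%:R = #|A|%:R - #|A :&: S|%:R :> R.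
  by rewrite -(cardsID S A) natrD [RHS]addrC addKr.
rewrite /Defs.ratio cardAS cardADS cardADS_R mulrBl divff //.
by rewrite pnatr_eq0 -lt0n.
Qed.

Lemma bin_deviation (t : bin_attr q) (b : bool) :
  `|Defs.ratio R (bin_X X) A #|A| (i := t) b - bin_pi pi t b| =
  `|Defs.ratio R X A #|A| (tagged t) - pi (tag t) (tagged t)|.
Proof.
case: b; rewrite /bin_pi ?ratio_bin_true ?ratio_bin_false //.
by rewrite -normrN; congr `|_|; ring.
Qed.

Lemma sum_bin_attr (F : forall i : 'I_p, 'I_(q i) -> R) :
  \sum_(t : bin_attr q) F (tag t) (tagged t) = \sum_i \sum_j F i j.
Proof. by rewrite (sig_big_dep (fun _ => true) (fun _ _ => true)). Qed.

Lemma loss1_bin :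
  loss1 R (bin_X X) (bin_pi pi) A #|A| = 2 * loss1 R X pi A #|A|.
Proof.
rewrite /loss1 -sum_bin_attr mulr_sumr; apply: eq_bigr => t _.
by rewrite big_bool /= !bin_deviation mulr_natl mulr2n.
Qed.

Lemma loss1max_bin :
  loss1max R (bin_X X) (bin_pi pi) A #|A| = loss1 R X pi A #|A|.
Proof.
rewrite /loss1max /loss1 -sum_bin_attr; apply: eq_bigr => t _.
apply/le_anti/andP; split; last by rewrite -(bin_deviation t true) le_bigmax.
by apply: bigmax_le => [|b _]; rewrite ?bin_deviation.
Qed.

Lemma lossmax_bin :
  lossmax R (bin_X X) (bin_pi pi) A #|A| = lossmax R X pi A #|A|.
Proof.
apply/le_anti/andP; split.
- apply: bigmax_le => [|t _]; first exact: bigmax_ge_id.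
  apply: bigmax_le => [|b _]; first exact: bigmax_ge_id.
  by rewrite bin_deviation; apply: bigmax_sup (le_bigmax _ _ (tagged t)).
- apply: bigmax_le => [|i _]; first exact: bigmax_ge_id.
  apply: bigmax_le => [|j _]; first exact: bigmax_ge_id.
  apply: (bigmax_sup (Tagged (fun i => 'I_(q i)) j)) => //.
  by apply: (bigmax_sup true) => //; rewrite bin_deviation.
Qed.

End BinaryInstance.

Lemma loss1max_le_loss1 (R : realFieldType) (C I : finType) (V : I -> finType)
    (X : C -> forall i, V i) (pi : forall i, V i -> R) (A : {set C}) (k : nat) :
  loss1max R X pi A k <= loss1 R X pi A k.
Proof. by apply: ler_sum => i _; apply: bigmax_le_sum. Qed.

Lemma loss1_le_loss1max (R : realFieldType) (C : finType) (p : nat)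
    (q : 'I_p -> nat) (X : C -> forall i : 'I_p, 'I_(q i))
    (pi : forall i : 'I_p, 'I_(q i) -> R) (A : {set C}) (k : nat) :
  loss1 R X pi A k <= (\max_(i < p) q i)%:R * loss1max R X pi A k.
Proof.
rewrite /loss1 /loss1max mulr_sumr; apply: ler_sum => i _.
apply: le_trans (sum_le_card_bigmax _) _; rewrite card_ord.
apply: ler_wpM2r; first exact: bigmax_ge_id.
by rewrite ler_nat (leq_bigmax_cond i).
Qed.

Theorem lemma1 (R : realFieldType) (C : finType) (p : nat) (q : 'I_p -> nat)
  (X : C -> forall i : 'I_p, 'I_(q i))
  (pi : forall i : 'I_p, 'I_(q i) -> R)
  (pi_ge0 : forall i j, 0 <= pi i j)
  (pi_sum1 : forall i, \sum_(j : 'I_(q i)) pi i j = 1)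
  (k : nat) (k_ge1 : (1 <= k)%N) (k_le : (k <= #|C|)%N)
  (A : {set C}) (cardA : #|A| = k) :
  [/\ loss1 R (bin_X X) (bin_pi pi) A k = 2 * loss1 R X pi A k,
      loss1max R X pi A k != 0 ->
        1 <= loss1max R (bin_X X) (bin_pi pi) A k / loss1max R X pi A k
        <= (\max_(i < p) q i)%:R
    & lossmax R (bin_X X) (bin_pi pi) A k = lossmax R X pi A k].
Proof.
subst k; split; [exact: loss1_bin | move=> loss_neq0 | exact: lossmax_bin].
have loss_gt0 : 0 < loss1max R X pi A #|A|.
  by rewrite lt_def loss_neq0 sumr_ge0 // => i _; apply: bigmax_ge_id.
rewrite loss1max_bin // ler_pdivlMr // mul1r ler_pdivrMr //.
by rewrite loss1max_le_loss1 loss1_le_loss1max.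
Qed.
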